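(* For integers $1\le k\le n$, the number of binary words of length $n+k-1$ with exactly $2k-1$ zeros equals the number of words of length $n-1$ over the alphabet $\{0,1,2\}$ having exactly $k-1$ letters equal to $2$ and avoiding $01$ (no letter $0$ is immediately followed by the letter $1$).
   Context: Words may be empty. *)

From mathcomp Require Import all_boot.
Set Implicit Arguments. Unset Strict Implicit. Unset Printing Implicit Defensive.

(* Words of length m over the alphabet {0,...,q-1} are m.-tuple 'I_q;
   letters are read as natural numbers via nat_of_ord. *)

Definition nocc (q m a : nat) (w : m.-tuple 'I_q) : nat :=
  count (fun x : 'I_q => nat_of_ord x == a) w.

Definition has01 (q m : nat) (w : m.-tuple 'I_q) : bool :=
  let s := map (@nat_of_ord q) w in
  [exists i : 'I_m, (i.+1 < m) && (nth 0 s i == 0) && (nth 0 s i.+1 == 1)].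

From mathcomp Require Import all_boot zify.

(* Let A(m, j) count the ternary words of length m with j letters 2 that
   avoid 01, and B(m, j) those among them starting with 1.  Prepending 1 to
   such a word always keeps it 01-free, prepending 0 does so unless the word
   starts with 1, and prepending 2 adds a letter 2; hence
     B(m+1, j) = A(m, j),   A(m+1, j) = 2 A(m, j) - B(m, j) + A(m, j-1).
   By Pascal's rule the pair ('C(m+j+1, 2j+1), 'C(m+j, 2j+1)) satisfies the
   same recursion and initial values, and 'C(N, r) counts the binary words of
   length N with r zeros. *)

Definition nwords q m (P : pred (seq nat)) :=
  #|[set w : m.-tuple 'I_q | P (map (@nat_of_ord q) w)]|.

Lemma nwordsE q m P :
  nwords q m P = \sum_(w : m.-tuple 'I_q) P (map (@nat_of_ord q) w).
Proof.
rewrite /nwords -sum1_card big_mkcond /=; apply: eq_bigr => w _.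
by rewrite inE; case: (P _).
Qed.

Lemma eq_nwords q m (P Q : pred (seq nat)) : P =1 Q -> nwords q m P = nwords q m Q.
Proof. by move=> eqPQ; rewrite !nwordsE; apply: eq_bigr => w _; rewrite eqPQ. Qed.

Lemma nwords_pred0 q m : nwords q m pred0 = 0.
Proof. by rewrite nwordsE big1. Qed.

Lemma nwordsID q m (P Q : pred (seq nat)) :
  nwords q m (fun s => P s && Q s) + nwords q m (fun s => P s && ~~ Q s)
  = nwords q m P.
Proof.
rewrite !nwordsE -big_split; apply: eq_bigr => w _.
by case: (P _); case: (Q _).
Qed.

Lemma nwords0 q P : nwords q 0 P = P [::].
Proof.
rewrite nwordsE (big_pred1 [tuple]) // => t.
by symmetry; apply/eqP; exact: tuple0.
Qed.

Lemma nwords_cons q m P :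
  nwords q m.+1 P = \sum_(0 <= x < q) nwords q m (fun s => P (x :: s)).
Proof.
rewrite big_mkord.
under eq_bigr do rewrite nwordsE.
rewrite nwordsE pair_big /=.
rewrite (reindex (fun p : 'I_q * m.-tuple 'I_q => [tuple of p.1 :: p.2])) //=.
exists (fun w : m.+1.-tuple 'I_q => (thead w, behead_tuple w)) => [[x t] _|w _].
  by rewrite theadE; congr pair; apply: val_inj.
by rewrite [RHS]tuple_eta.
Qed.

Lemma nwords_binary_zeros N r :
  nwords 2 N (fun s => count_mem 0 s == r) = 'C(N, r).
Proof.
elim: N r => [|N IH] r; first by rewrite nwords0 bin0n eq_sym.
rewrite nwords_cons !big_nat_recl // big_geq // addn0 /=.
rewrite [X in _ + X](eq_nwords _ _ _ (fun s => count_mem 0 s == r)) ?IH //.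
case: r => [|r].
  by rewrite (eq_nwords _ _ _ pred0) ?nwords_pred0 ?bin0 // => s; rewrite add1n.
rewrite (eq_nwords _ _ _ (fun s => count_mem 0 s == r)) => [|s].
  by rewrite IH binS addnC.
by rewrite add1n eqSS.
Qed.

Fixpoint has01_seq (s : seq nat) : bool :=
  if s is a :: s' then ((a == 0) && (head 0 s' == 1)) || has01_seq s' else false.

Lemma has01_seqP s :
  reflect (exists i, [&& i.+1 < size s, nth 0 s i == 0 & nth 0 s i.+1 == 1])
          (has01_seq s).
Proof.
elim: s => [|a s IH] /=; first by apply: ReflectF => -[i].
apply: (iffP orP) => [[/andP[a0 s1]|/IH[i i01]]|[[|i] /= /and3P[lti si0 si1]]].
- by exists 0; rewrite /= a0; case: s s1 {IH}.
- by exists i.+1.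
- by left; rewrite si0 si1.
- by right; apply/IH; exists i; apply/and3P.
Qed.

Lemma has01E m (w : m.-tuple 'I_3) : has01 w = has01_seq (map (@nat_of_ord 3) w).
Proof.
have sz_w : size (map (@nat_of_ord 3) w) = m by rewrite size_map size_tuple.
apply/existsP/has01_seqP => [[i i01]|[i]].
  by exists i; rewrite sz_w andbA.
rewrite sz_w => /and3P[lti si0 si1].
by exists (Ordinal (ltnW lti)); rewrite /= lti si0 si1.
Qed.

Definition free01 j (s : seq nat) := (count (pred1 2) s == j) && ~~ has01_seq s.

Definition nfree01 m j := nwords 3 m (free01 j).

Definition nfree01_head1 m j := nwords 3 m (fun s => free01 j s && (head 0 s == 1)).

Lemma nfree01_head1S m j : nfree01_head1 m.+1 j = nfree01 m j.
Proof.
rewrite /nfree01_head1 nwords_cons !big_nat_recl // big_geq //=.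
rewrite !(eq_nwords _ _ _ pred0 (fun s => andbF _)) !nwords_pred0 add0n !addn0.
by apply: eq_nwords => s; rewrite andbT /free01 /= add0n.
Qed.

Lemma nfree01S m j :
  nfree01 m.+1 j + nfree01_head1 m j
  = (if j is j'.+1 then nfree01 m j' else 0) + 2 * nfree01 m j.
Proof.
rewrite /nfree01 nwords_cons !big_nat_recl // big_geq //= addn0.
have cons2 s : free01 j (2 :: s) = if j is j'.+1 then free01 j' s else false.
  by rewrite /free01 /= add1n; case: j.
have cons0 s : free01 j (0 :: s) = free01 j s && ~~ (head 0 s == 1).
  by rewrite /free01 /= add0n; case: (head 0 s == 1); rewrite /= ?andbT ?andbF.
have cons1 s : free01 j (1 :: s) = free01 j s by rewrite /free01 /= add0n.
rewrite (eq_nwords _ _ _ _ cons0) (eq_nwords _ _ _ _ cons1).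
rewrite (eq_nwords _ _ _ _ cons2).
rewrite -(nwordsID _ _ (free01 j) (fun s => head 0 s == 1)) -/(nfree01_head1 m j).
move: (nwords 3 m (fun s => free01 j s && _)) => not1.
by case: j {cons0 cons1 cons2} => [|j]; rewrite ?nwords_pred0 -?/(nfree01 m j); lia.
Qed.

Lemma binSS_recurrence N r :
  'C(N.+2, r.+2) + 'C(N, r.+2) = 'C(N, r) + 2 * 'C(N.+1, r.+2).
Proof. have := binS N.+1 r.+1; have := binS N r.+1; have := binS N r; lia. Qed.

Lemma nfree01E m j :
  nfree01 m j = 'C(m + j + 1, j.*2.+1) /\ nfree01_head1 m j = 'C(m + j, j.*2.+1).
Proof.
elim: m j => [|m IH] j.
  rewrite /nfree01 /nfree01_head1 !nwords0 andbF !add0n (@bin_small j); last by lia.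
  by case: j => [|j]; rewrite // bin_small //; lia.
rewrite nfree01_head1S; split; last by case: (IH j) => -> _; rewrite addn1 addSn.
have := nfree01S m j; case: j => [|j].
  by case: (IH 0) => -> ->; rewrite !bin1; lia.
case: (IH j) => -> _; case: (IH j.+1) => -> ->.
have -> : m.+1 + j.+1 + 1 = (m + j + 1).+2 by lia.
have -> : m + j.+1 + 1 = (m + j + 1).+1 by lia.
have -> : m + j.+1 = m + j + 1 by lia.
have := binSS_recurrence (m + j + 1) j.*2.+1.
rewrite doubleS; lia.
Qed.

Lemma card_nocc0_binary N r :
  #|[set w : N.-tuple 'I_2 | nocc 0 w == r]| = 'C(N, r).
Proof.
rewrite -nwords_binary_zeros; apply: eq_card => w.
by rewrite !inE /nocc count_map.
Qed.

Lemma card_nocc2_avoiding01 m j :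
  #|[set w : m.-tuple 'I_3 | (nocc 2 w == j) && ~~ has01 w]| = 'C(m + j + 1, j.*2.+1).
Proof.
have [<- _] := nfree01E m j; apply: eq_card => w.
by rewrite !inE /nocc /free01 count_map has01E.
Qed.

Theorem mainTheorem16 (n k : nat) :
  1 <= k -> k <= n ->
  #|[set w : (n + k - 1).-tuple 'I_2 | nocc 0 w == 2 * k - 1]|
  = #|[set w : (n - 1).-tuple 'I_3 | (nocc 2 w == k - 1) && ~~ has01 w]|.
Proof.
move=> k_gt0 le_kn; rewrite card_nocc0_binary card_nocc2_avoiding01.
congr binomial; lia.
Qed.
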